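(* Let $\bar Q=(Q,I)$ be a locally gentle bound quiver and let $\omega$ be a walk of $\bar Q$ that does not kiss itself. If $\omega$ contains as a factor a non-trivial oriented cycle $c$ of $Q$ with $c,c^2\notin I$, then $\omega$ (up to inversion) is of the form $\sigma c^{\pm\infty}$ for some (possibly infinite) substring $\sigma$, where $c^{\infty}=ccc\cdots$ and $c^{-\infty}=(c^{-1})^\infty$.
   Context: Locally gentle bound quiver $\bar Q=(Q,I)$: $Q$ finite, $I$ an ideal of $kQ$ generated by paths of length two ($kQ/I$ possibly infinite-dimensional), each vertex with at most two incoming and two outgoing arrows, and for each arrow $\beta$ at most one $\alpha$ with $t(\alpha)=s(\beta)$, $\alpha\beta\notin I$, at most one with $\alpha\beta\in I$, at most one $\gamma$ with $t(\beta)=s(\gamma)$, $\beta\gamma\notin I$, at most one with $\beta\gamma\in I$. $\bar Q^{\mathrm{bl}}$ adds degree-one blossom vertices and arrows so each vertex of $Q_0$ has two incoming and two outgoing arrows, relations completed to stay locally gentle. A finite string is a composable word $\alpha_1^{\varepsilon_1}\cdots\alpha_\ell^{\varepsilon_\ell}$ in arrows and formal inverses with no factor $\pi^{\pm1}$ for a path $\pi\in I$ and no factor $\alpha\alpha^{-1}$, $\alpha^{-1}\alpha$; an eventually cyclic string is ${}^\infty(c_1^{\varepsilon_1})\sigma(c_2^{\varepsilon_2})^\infty$ with $c_i$ oriented cycles (possibly of length zero) and $c_1^{2\varepsilon_1}\sigma c_2^{2\varepsilon_2}$ a finite string. A walk is a maximal (finite or eventually cyclic) string of $\bar Q^{\mathrm{bl}}$,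 identified with its inverse. For $\omega=\prod_{i<\ell<j}\alpha_\ell^{\varepsilon_\ell}$, a substring $\prod_{i'<\ell<j'}\alpha_\ell^{\varepsilon_\ell}$ ($i\le i'<j'\le j$, strict at finite ends, remembered with its position) is on top if ($i'=-\infty$ or $\varepsilon_{i'}=-1$) and ($j'=\infty$ or $\varepsilon_{j'}=1$), at the bottom if ($i'=-\infty$ or $\varepsilon_{i'}=1$) and ($j'=\infty$ or $\varepsilon_{j'}=-1$). $\omega$ kisses itself if some finite string occurs (at possibly different positions) as a top substring and as a bottom substring of $\omega$. *)

From HB Require Import structures.
From Stdlib Require Import ZArith.
From mathcomp Require Import all_boot.

Set Implicit Arguments.
Unset Strict Implicit.
Unset Printing Implicit Defensive.

(* A finite quiver (finite vertex type qV, finite arrow type qA, source and *)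
(* target maps) together with the boolean relation [qrel a b] meaning that  *)
(* the length-two path  a b  (a followed by b) is one of the generators of  *)
(* I.  Since I is generated by paths of length two, a path of length two is *)
(* in I iff it is such a generator, and a path lies in I iff one of its     *)
(* length-two factors does.                                                 *)
Record bquiver := BQuiver {
  qV : finType;
  qA : finType;
  qsrc : qA -> qV;
  qtgt : qA -> qV;
  qrel : qA -> qA -> bool }.

Definition indeg (Q : bquiver) (v : qV Q) : nat := #|[pred a | qtgt a == v]|.
Definition outdeg (Q : bquiver) (v : qV Q) : nat := #|[pred a | qsrc a == v]|.

Definition locally_gentle (Q : bquiver) : Prop :=
  (forall a b : qA Q, qrel a b -> qtgt a = qsrc b) /\
  (forall v : qV Q, indeg v <= 2 /\ outdeg v <= 2) /\
  (forall beta : qA Q,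
     #|[pred al | (qtgt al == qsrc beta) && ~~ qrel al beta]| <= 1 /\
     #|[pred al | (qtgt al == qsrc beta) && qrel al beta]| <= 1 /\
     #|[pred ga | (qtgt beta == qsrc ga) && ~~ qrel beta ga]| <= 1 /\
     #|[pred ga | (qtgt beta == qsrc ga) && qrel beta ga]| <= 1).

(* Qb is obtained from Q by
   adding degree-one blossom vertices and blossom arrows (each joining an
   original vertex to a blossom vertex) so that every original vertex has
   exactly two incoming and two outgoing arrows, the relations between
   original arrows are unchanged, and Qb is again locally gentle. *)
Definition is_blossoming (Q Qb : bquiver)
    (iV : qV Q -> qV Qb) (iA : qA Q -> qA Qb) : Prop :=
  injective iV /\ injective iA /\
  (forall a, qsrc (iA a) = iV (qsrc a)) /\
  (forall a, qtgt (iA a) = iV (qtgt a)) /\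
  (forall a b, qrel (iA a) (iA b) = qrel a b) /\
  (forall v, indeg (iV v) = 2 /\ outdeg (iV v) = 2) /\
  (forall w, (forall v, w <> iV v) -> indeg w + outdeg w = 1) /\
  (forall e, (forall a, e <> iA a) ->
     ((exists v, qsrc e = iV v) /\ (forall v, qtgt e <> iV v)) \/
     ((forall v, qsrc e <> iV v) /\ (exists v, qtgt e = iV v))) /\
  locally_gentle Qb.

(* Strings.  A letter is an arrow with an orientation: (a, true) = a,       *)
(* (a, false) = a^{-1}.                                                      *)
Definition letter (Q : bquiver) := (qA Q * bool)%type.

Definition lstart (Q : bquiver) (x : letter Q) : qV Q :=
  if x.2 then qsrc x.1 else qtgt x.1.
Definition lend (Q : bquiver) (x : letter Q) : qV Q :=
  if x.2 then qtgt x.1 else qsrc x.1.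

(* x y is a composable factor which is neither (a factor of) pi^{+-1} with
   pi in I, nor of the form a a^{-1} or a^{-1} a. *)
Definition valid_pair (Q : bquiver) (x y : letter Q) : Prop :=
  lend x = lstart y /\
  ~ (x.1 = y.1 /\ x.2 = ~~ y.2) /\
  (x.2 -> y.2 -> ~~ qrel x.1 y.1) /\
  (~~ x.2 -> ~~ y.2 -> ~~ qrel y.1 x.1).

(* A string  prod_{lo < k < hi} w k ; lo = None means -oo, hi = None means +oo. *)
Record str (Q : bquiver) := Str {
  slo : option Z;
  shi : option Z;
  sw : Z -> letter Q }.

Definition indom (lo hi : option Z) (k : Z) : Prop :=
  (match lo with Some i => (i < k)%Z | None => True end) /\
  (match hi with Some j => (k < j)%Z | None => True end).

(* finite or eventually cyclic string: every infinite end is eventually a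
   power c^{+-infinity} of an oriented cycle c of positive length (periodic
   with constant orientation) *)
Definition is_string (Q : bquiver) (s : str Q) : Prop :=
  (forall i j, slo s = Some i -> shi s = Some j -> (i < j)%Z) /\
  (forall k, indom (slo s) (shi s) k -> indom (slo s) (shi s) (k + 1) ->
     valid_pair (sw s k) (sw s (k + 1))) /\
  (slo s = None -> exists N p, (0 < p)%Z /\ indom (slo s) (shi s) N /\
     forall k, (k <= N)%Z -> sw s (k - p) = sw s k /\ (sw s k).2 = (sw s N).2) /\
  (shi s = None -> exists N p, (0 < p)%Z /\ indom (slo s) (shi s) N /\
     forall k, (N <= k)%Z -> sw s (k + p) = sw s k /\ (sw s k).2 = (sw s N).2).

Definition upd (Q : bquiver) (f : Z -> letter Q) (i : Z) (x : letter Q) :=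
  fun k => if Z.eqb k i then x else f k.

(* a walk: a maximal string (no letter can be added at a finite end) *)
Definition is_walk (Q : bquiver) (s : str Q) : Prop :=
  is_string s /\
  (forall i x, slo s = Some i ->
     ~ is_string (Str (Some (i - 1)%Z) (shi s) (upd (sw s) i x))) /\
  (forall j x, shi s = Some j ->
     ~ is_string (Str (slo s) (Some (j + 1)%Z) (upd (sw s) j x))).

Definition str_inv (Q : bquiver) (s : str Q) : str Q :=
  Str (option_map Z.opp (shi s)) (option_map Z.opp (slo s))
      (fun k => ((sw s (- k)%Z).1, ~~ (sw s (- k)%Z).2)).

(* The finite substring prod_{a < k < b} w k (a, b in the domain, a < b) is *)
(* on top if w a is an inverse letter and w b a direct letter, and at the   *)
(* bottom if w a is direct and w b inverse.  Its start vertex is lend (w a) *)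
(* (needed to distinguish trivial substrings).                              *)
Definition top_at (Q : bquiver) (s : str Q) (a b : Z) : Prop :=
  indom (slo s) (shi s) a /\ indom (slo s) (shi s) b /\ (a < b)%Z /\
  (sw s a).2 = false /\ (sw s b).2 = true.

Definition bot_at (Q : bquiver) (s : str Q) (a b : Z) : Prop :=
  indom (slo s) (shi s) a /\ indom (slo s) (shi s) b /\ (a < b)%Z /\
  (sw s a).2 = true /\ (sw s b).2 = false.

Definition same_sub (Q : bquiver) (s : str Q) (a b a' b' : Z) : Prop :=
  (b - a = b' - a')%Z /\ lend (sw s a) = lend (sw s a') /\
  forall k, (0 < k < b - a)%Z -> sw s (a + k)%Z = sw s (a' + k)%Z.

Definition inv_sub (Q : bquiver) (s : str Q) (a b a' b' : Z) : Prop :=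
  (b - a = b' - a')%Z /\ lend (sw s a) = lstart (sw s b') /\
  forall k, (0 < k < b - a)%Z ->
    sw s (a + k)%Z = ((sw s (b' - k)%Z).1, ~~ (sw s (b' - k)%Z).2).

Definition kisses_itself (Q : bquiver) (s : str Q) : Prop :=
  exists a b a' b', top_at s a b /\ bot_at s a' b' /\
    (same_sub s a b a' b' \/ inv_sub s a b a' b').

Definition cycle_not_in_I (Q : bquiver) (m : nat) (c : nat -> qA Q) : Prop :=
  0 < m /\
  forall l, l < m ->
    qtgt (c l) = qsrc (c (l.+1 %% m)) /\ ~~ qrel (c l) (c (l.+1 %% m)).

Definition has_cycle_factor (Q Qb : bquiver) (iA : qA Q -> qA Qb)
    (s : str Qb) (m : nat) (c : nat -> qA Q) : Prop :=
  exists k : Z,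
    (forall l, l < m -> indom (slo s) (shi s) (k + Z.of_nat l)%Z) /\
    ((forall l, l < m -> sw s (k + Z.of_nat l)%Z = (iA (c l), true)) \/
     (forall l, l < m -> sw s (k + Z.of_nat l)%Z = (iA (c (m - 1 - l)), false))).

Definition ends_with_cycle (Q Qb : bquiver) (iA : qA Q -> qA Qb)
    (s : str Qb) (m : nat) (c : nat -> qA Q) : Prop :=
  shi s = None /\
  exists N : Z, indom (slo s) (shi s) N /\
    ((forall n : nat, sw s (N + Z.of_nat n)%Z = (iA (c (n %% m)), true)) \/
     (forall n : nat, sw s (N + Z.of_nat n)%Z = (iA (c (m - 1 - n %% m)), false))).

From Stdlib Require Import ZArith Lia Classical.
From mathcomp Require Import all_boot zify.

(* In the blossoming quiver, local gentleness gives every arrow at most one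
   continuation outside I in each direction.  Hence, starting from the factor
   c^{+-1}, the letters of omega of the same orientation are forced to follow
   the periodic word c^{+-oo}, and since a walk is maximal this run can only be
   interrupted by a letter of the opposite orientation.  If it were interrupted
   on both sides, at positions a and b, then the factors of omega strictly
   between a and b - |c| and strictly between a + |c| and b would be the same
   string, one on top and one at the bottom, so omega would kiss itself.
   Hence the run is infinite on one side. *)

Set Implicit Arguments.
Unset Strict Implicit.
Unset Printing Implicit Defensive.

Local Open Scope Z_scope.

Lemma least_counterexample (P : nat -> Prop) :
  (exists n, ~ P n) -> exists n, ~ P n /\ forall j, (j < n)%N -> P j.
Proof.
move=> [n nPn].
have [k [[nPk leastk] _]] := dec_inh_nat_subset_has_unique_least_element
  (fun n => ~ P n) (fun j => classic _) (ex_intro _ n nPn).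
exists k; split=> // j ltjk; apply: NNPP => nPj.
have := leastk j nPj; lia.
Qed.

Lemma maximal_run_around (P : Z -> Prop) (k0 : Z) (m : nat) :
  (forall l : nat, (l < m)%N -> P (k0 + Z.of_nat l)) ->
  [\/ forall n : nat, P (k0 + Z.of_nat n),
      forall n : nat, P (k0 - 1 - Z.of_nat n) |
      exists a b, [/\ a < k0, k0 + Z.of_nat m <= b, ~ P a, ~ P b &
                      forall i, a < i < b -> P i]].
Proof.
move=> Prun.
have [Phi|/not_all_ex_not/least_counterexample [n1 [nP1 P1]]] :=
  classic (forall n : nat, P (k0 + Z.of_nat n)); first by constructor 1.
have [Plo|/not_all_ex_not/least_counterexample [n2 [nP2 P2]]] :=
  classic (forall n : nat, P (k0 - 1 - Z.of_nat n)); first by constructor 2.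
have len1 : (m <= n1)%N.
  by rewrite leqNgt; apply/negP => /Prun.
constructor 3; exists (k0 - 1 - Z.of_nat n2), (k0 + Z.of_nat n1).
split=> //; try lia.
move=> i ilt; have [leki|ltik] := Z.le_gt_cases k0 i.
- have -> : i = k0 + Z.of_nat (Z.to_nat (i - k0)) by lia.
  apply: P1; lia.
- have -> : i = k0 - 1 - Z.of_nat (Z.to_nat (k0 - 1 - i)) by lia.
  apply: P2; lia.
Qed.

Definition cycle_index (m : nat) (i : Z) : nat := Z.to_nat (i mod Z.of_nat m).

Section CycleIndex.
Variable m : nat.
Hypothesis m_gt0 : (0 < m)%N.

Lemma cycle_indexE i : Z.of_nat (cycle_index m i) = i mod Z.of_nat m.
Proof. rewrite /cycle_index Z2Nat.id //; have := Z.mod_pos_bound i (Z.of_nat m); lia. Qed.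

Lemma cycle_index_lt i : (cycle_index m i < m)%N.
Proof. have := Z.mod_pos_bound i (Z.of_nat m); have := cycle_indexE i; lia. Qed.

Lemma cycle_index_nat (n : nat) : cycle_index m (Z.of_nat n) = (n %% m)%N.
Proof.
apply: Nat2Z.inj; rewrite cycle_indexE; symmetry.
apply: (Z.mod_unique_pos _ _ (Z.of_nat (n %/ m))).
- have := ltn_pmod n m_gt0; lia.
- have := divn_eq n m; lia.
Qed.

Lemma cycle_indexS i : cycle_index m (i + 1) = ((cycle_index m i).+1 %% m)%N.
Proof.
rewrite -cycle_index_nat Nat2Z.inj_succ -Z.add_1_r cycle_indexE.
by rewrite /cycle_index Zplus_mod_idemp_l.
Qed.

Lemma cycle_indexDm i : cycle_index m (i + Z.of_nat m) = cycle_index m i.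
Proof.
have -> : i + Z.of_nat m = i + 1 * Z.of_nat m by lia.
by rewrite /cycle_index Z_mod_plus_full.
Qed.

Lemma cycle_index_opp i : cycle_index m (- 1 - i) = (m - 1 - cycle_index m i)%N.
Proof.
apply: Nat2Z.inj; rewrite cycle_indexE.
have := Z.mod_pos_bound i (Z.of_nat m); have := cycle_indexE i => idxE bnd.
rewrite Nat2Z.inj_sub; last by have := cycle_index_lt i; lia.
rewrite Nat2Z.inj_sub; last by lia.
symmetry; apply: (Z.mod_unique_pos _ _ (- (i / Z.of_nat m) - 1)); first lia.
have := Z.div_mod i (Z.of_nat m); lia.
Qed.

End CycleIndex.

Definition nonzero_path2 (Q : bquiver) (a b : qA Q) : Prop :=
  qtgt a = qsrc b /\ ~~ qrel a b.

Lemma valid_pair_same_orientation (Q : bquiver) (a b : qA Q) (o : bool) :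
  valid_pair (a, o) (b, o) <-> (if o then nonzero_path2 a b else nonzero_path2 b a).
Proof.
rewrite /valid_pair /lend /lstart /nonzero_path2.
by case: o => /=; split=> [[-> [_ []]]|[-> nr]]; intuition.
Qed.

Section LocallyGentle.
Variables (Q : bquiver) (hQ : locally_gentle Q).
Implicit Types x y : letter Q.

Lemma nonzero_path2_uniq_r (a b b' : qA Q) :
  nonzero_path2 a b -> nonzero_path2 a b' -> b = b'.
Proof.
move=> [ab nrab] [ab' nrab'].
have [_ [_ /(_ a) [_ [_ [/card_le1_eqP succ_uniq _]]]]] := hQ.
by symmetry; apply: succ_uniq; apply/andP; split=> //; apply/eqP.
Qed.

Lemma nonzero_path2_uniq_l (a a' b : qA Q) :
  nonzero_path2 a b -> nonzero_path2 a' b -> a = a'.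
Proof.
move=> [ab nrab] [a'b nra'b].
have [_ [_ /(_ b) [/card_le1_eqP pred_uniq _]]] := hQ.
by symmetry; apply: pred_uniq; apply/andP; split=> //; apply/eqP.
Qed.

Lemma valid_pair_uniq_r x y y' :
  valid_pair x y -> valid_pair x y' -> y.2 = x.2 -> y'.2 = x.2 -> y = y'.
Proof.
case: x y y' => [a o] [b o1] [b' o2] /= vb vb' e1 e2; subst o1 o2.
move/valid_pair_same_orientation: vb; move/valid_pair_same_orientation: vb'.
by case: o => vb' vb; congr pair;
  [apply: nonzero_path2_uniq_r vb vb' | apply: nonzero_path2_uniq_l vb vb'].
Qed.

Lemma valid_pair_uniq_l x x' y :
  valid_pair x y -> valid_pair x' y -> x.2 = y.2 -> x'.2 = y.2 -> x = x'.
Proof.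
case: x x' y => [a o1] [a' o2] [b o] /= va va' e1 e2; subst o1 o2.
move/valid_pair_same_orientation: va; move/valid_pair_same_orientation: va'.
by case: o => va' va; congr pair;
  [apply: nonzero_path2_uniq_l va va' | apply: nonzero_path2_uniq_r va va'].
Qed.

End LocallyGentle.

Section Strings.
Variable Q : bquiver.
Implicit Types (s : str Q) (f : Z -> letter Q) (x : letter Q).

Definition letter_inv x : letter Q := (x.1, ~~ x.2).

Lemma letter_invK : involutive letter_inv.
Proof. by case=> a o; rewrite /letter_inv negbK. Qed.

Lemma upd_other f i x k : k <> i -> upd f i x k = f k.
Proof. by rewrite /upd; case: Z.eqb_spec. Qed.

Lemma indom_succ lo hi i : indom lo hi i -> indom lo hi (i + 1) \/ hi = Some (i + 1).
Proof.
rewrite /indom; case: hi => [h|] [lo_i hi_i]; last by left; case: lo lo_i => //= *; lia.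
have [->|ne] := Z.eq_dec h (i + 1); [by right | left].
by split; [case: lo lo_i => //= *|]; lia.
Qed.

Lemma indom_pred lo hi i : indom lo hi i -> indom lo hi (i - 1) \/ lo = Some (i - 1).
Proof.
rewrite /indom; case: lo => [l|] [lo_i hi_i]; last by left; case: hi hi_i => //= *; lia.
have [->|ne] := Z.eq_dec l (i - 1); [by right | left].
by split; [|case: hi hi_i => //= *]; lia.
Qed.

Lemma indom_between lo hi a b i :
  indom lo hi a -> indom lo hi b -> a <= i <= b -> indom lo hi i.
Proof. by rewrite /indom; case: lo hi => [l|] [h|] /=; lia. Qed.

Lemma is_string_extend_hi s h x :
  is_string s -> shi s = Some h -> indom (slo s) (shi s) (h - 1) ->
  valid_pair (sw s (h - 1)) x ->
  is_string (Str (slo s) (Some (h + 1)) (upd (sw s) h x)).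
Proof.
move=> [_ [valid [per_lo _]]] shiE dom_h1 vx; rewrite shiE in valid per_lo dom_h1.
case: dom_h1 => lo_h1 _.
split; [|split; [|split]] => //=.
- by move=> i j loE [<-]; move: lo_h1; rewrite loE; lia.
- move=> k [lo_k hi_k] [_ hi_k1].
  have [->|ne] := Z.eq_dec k (h - 1).
    by rewrite Z.sub_add upd_other; [rewrite /upd Z.eqb_refl | lia].
  rewrite !upd_other; try lia.
  by apply: valid; split=> //=; try lia; case: (slo s) lo_k => //= l; lia.
- move=> /per_lo [N [p [p_gt0 [[lo_N ltNh] perN]]]].
  exists N, p; split=> //; split; first by split=> //=; lia.
  by move=> k leNk; rewrite !upd_other; try lia; apply: perN.
Qed.

Lemma is_string_extend_lo s l x :
  is_string s -> slo s = Some l -> indom (slo s) (shi s) (l + 1) ->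
  valid_pair x (sw s (l + 1)) ->
  is_string (Str (Some (l - 1)) (shi s) (upd (sw s) l x)).
Proof.
move=> [_ [valid [_ per_hi]]] sloE dom_l1 vx; rewrite sloE in valid per_hi dom_l1.
case: dom_l1 => _ hi_l1.
split; [|split; [|split]] => //=.
- by move=> i j [<-] hiE; move: hi_l1; rewrite hiE; lia.
- move=> k [lo_k hi_k] [lo_k1 hi_k1].
  have [->|ne] := Z.eq_dec k l.
    by rewrite [upd _ _ _ (l + 1)]upd_other; [rewrite /upd Z.eqb_refl | lia].
  rewrite !upd_other; try lia.
  by apply: valid; split=> //=; try lia; case: (shi s) hi_k1 => //= h; lia.
- move=> /per_hi [N [p [p_gt0 [[ltlN hi_N] perN]]]].
  exists N, p; split=> //; split; first by split=> //=; lia.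
  by move=> k leNk; rewrite !upd_other; try lia; apply: perN.
Qed.

Lemma walk_stuck_hi s h x :
  is_walk s -> shi s = Some h -> indom (slo s) (shi s) (h - 1) ->
  ~ valid_pair (sw s (h - 1)) x.
Proof.
move=> [str_s [_ max_hi]] shiE dom vx.
exact: (max_hi h x shiE (is_string_extend_hi str_s shiE dom vx)).
Qed.

Lemma walk_stuck_lo s l x :
  is_walk s -> slo s = Some l -> indom (slo s) (shi s) (l + 1) ->
  ~ valid_pair x (sw s (l + 1)).
Proof.
move=> [str_s [max_lo _]] sloE dom vx.
exact: (max_lo l x sloE (is_string_extend_lo str_s sloE dom vx)).
Qed.

Lemma same_sub_sym s a b a' b' : same_sub s a b a' b' -> same_sub s a' b' a b.
Proof.
by move=> [len [lendE subE]]; split; [lia | split=> // k k_lt; rewrite subE //; lia].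
Qed.

Lemma periodic_run_kisses s f (o : bool) (p a b : Z) :
  is_string s -> 0 < p ->
  (forall i, f (i + p) = f i) -> (forall i, (f i).2 = o) ->
  (forall i, lend (f i) = lstart (f (i + 1))) ->
  indom (slo s) (shi s) a -> indom (slo s) (shi s) b -> a + p < b ->
  (sw s a).2 = ~~ o -> (sw s b).2 = ~~ o ->
  (forall i, a < i < b -> sw s i = f i) -> kisses_itself s.
Proof.
move=> [_ [valid _]] p_gt0 f_per f_o f_chain dom_a dom_b ltab sw_a sw_b run.
have dom i : a <= i <= b -> indom (slo s) (shi s) i by apply: indom_between.
have shift : same_sub s a (b - p) (a + p) b.
  split; [lia | split].
  - have [-> _] := valid a dom_a (dom (a + 1) ltac:(lia)).
    rewrite !run ?f_chain; try lia.
    by rewrite (_ : a + p + 1 = a + 1 + p) ?f_per //; lia.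
  - move=> k k_lt; rewrite !run; try lia.
    by rewrite (_ : a + p + k = a + k + p) ?f_per //; lia.
have o_in i : a < i < b -> (sw s i).2 = o by move=> i_ab; rewrite run.
case: o {f_o} sw_a sw_b o_in => /= sw_a sw_b o_in.
- exists a, (b - p), (a + p), b; split; [|split; [|by left]];
    (split; [|split; [|split; [|split]]]);
    solve [done | apply: dom; lia | apply: o_in; lia | lia].
- exists (a + p), b, a, (b - p); split; [|split; [|by left; apply: same_sub_sym]];
    (split; [|split; [|split; [|split]]]);
    solve [done | apply: dom; lia | apply: o_in; lia | lia].
Qed.

End Strings.

Section CycleRun.
Variables (Q Qb : bquiver) (iV : qV Q -> qV Qb) (iA : qA Q -> qA Qb).
Hypothesis hb : is_blossoming iV iA.
Variables (m : nat) (c : nat -> qA Q).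
Hypothesis hc : cycle_not_in_I m c.

Let m_gt0 : (0 < m)%N := hc.1.

Let hQb : locally_gentle Qb.
Proof. by case: hb => _ [_ [_ [_ [_ [_ [_ [_ ?]]]]]]]. Qed.

(* [cycle_letter true] is c^oo = c_0 c_1 ... and [cycle_letter false] is
   c^-oo = c_(m-1)^-1 c_(m-2)^-1 ..., both read from position 0 and extended
   periodically to all of Z. *)
Definition cycle_letter (o : bool) (i : Z) : letter Qb :=
  if o then (iA (c (cycle_index m i)), true)
  else (iA (c (cycle_index m (- 1 - i))), false).

Lemma cycle_letter_orientation o i : (cycle_letter o i).2 = o.
Proof. by case: o. Qed.

Lemma cycle_letter_periodic o i : cycle_letter o (i + Z.of_nat m) = cycle_letter o i.
Proof.
case: o => /=; first by rewrite cycle_indexDm.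
by rewrite -(cycle_indexDm m_gt0 (- 1 - (i + Z.of_nat m))) Z.sub_add_distr Z.sub_add.
Qed.

Lemma cycle_letter_nat o (n : nat) :
  cycle_letter o (Z.of_nat n) =
  if o then (iA (c (n %% m)), true) else (iA (c (m - 1 - n %% m)), false).
Proof. by case: o; rewrite /cycle_letter ?(cycle_index_opp m_gt0) (cycle_index_nat m_gt0). Qed.

Lemma cycle_letter_opp o i : cycle_letter o (- 1 - i) = letter_inv (cycle_letter (~~ o) i).
Proof. by case: o => //; rewrite /cycle_letter (_ : - 1 - (- 1 - i) = i) //; lia. Qed.

Lemma cycle_nonzero_path2 j :
  (j < m)%N -> nonzero_path2 (iA (c j)) (iA (c (j.+1 %% m))).
Proof.
have [_ [_ [srcE [tgtE [relE _]]]]] := hb.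
by move=> /(hc.2 j) [cj nrj]; rewrite /nonzero_path2 srcE tgtE relE cj.
Qed.

Lemma cycle_letter_valid o i : valid_pair (cycle_letter o i) (cycle_letter o (i + 1)).
Proof.
case: o; rewrite /cycle_letter; apply/valid_pair_same_orientation.
  by rewrite cycle_indexS //; apply/cycle_nonzero_path2/cycle_index_lt.
rewrite [- 1 - i](_ : _ = - 1 - (i + 1) + 1); last by lia.
by rewrite cycle_indexS //; apply/cycle_nonzero_path2/cycle_index_lt.
Qed.

Lemma ends_with_cycle_of_letters (s : str Qb) N o :
  shi s = None -> indom (slo s) (shi s) N ->
  (forall n : nat, sw s (N + Z.of_nat n) = cycle_letter o (Z.of_nat n)) ->
  ends_with_cycle iA s m c.
Proof.
move=> hiE dom_N run; split=> //; exists N; split=> //.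
by case: o run => run; [left | right] => n; rewrite run cycle_letter_nat.
Qed.

Section Run.
Variables (s : str Qb) (o : bool) (k0 : Z).
Hypothesis hw : is_walk s.

Definition on_cycle_run (i : Z) : Prop :=
  indom (slo s) (shi s) i /\ sw s i = cycle_letter o (i - k0).

Definition opposite_letter_at (i : Z) : Prop :=
  indom (slo s) (shi s) i /\ (sw s i).2 = ~~ o.

Lemma cycle_run_exit_hi i : on_cycle_run (i - 1) -> ~ on_cycle_run i -> opposite_letter_at i.
Proof.
move=> [dom_i1 sw_i1] off_i.
have next_valid : valid_pair (sw s (i - 1)) (cycle_letter o (i - k0)).
  rewrite sw_i1 (_ : i - 1 - k0 = i - k0 - 1); last by lia.
  by rewrite -{2}[i - k0](Z.sub_add 1); apply: cycle_letter_valid.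
have := indom_succ dom_i1; rewrite Z.sub_add => -[dom_i|hiE]; last first.
  by case: (walk_stuck_hi hw hiE dom_i1 next_valid).
split=> //; have [sw_i_o|] := eqVneq (sw s i).2 o; last by case: (sw s i).2 o => [] [].
case: off_i; split=> //.
have valid_i : valid_pair (sw s (i - 1)) (sw s i).
  by have := hw.1.2.1 (i - 1) dom_i1; rewrite Z.sub_add; apply.
by apply: (valid_pair_uniq_r hQb valid_i next_valid); rewrite sw_i1 !cycle_letter_orientation.
Qed.

Lemma cycle_run_exit_lo i : on_cycle_run (i + 1) -> ~ on_cycle_run i -> opposite_letter_at i.
Proof.
move=> [dom_i1 sw_i1] off_i.
have prev_valid : valid_pair (cycle_letter o (i - k0)) (sw s (i + 1)).
  rewrite sw_i1 (_ : i + 1 - k0 = i - k0 + 1); last by lia.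
  exact: cycle_letter_valid.
have := indom_pred dom_i1; rewrite Z.add_simpl_r => -[dom_i|loE]; last first.
  by case: (walk_stuck_lo hw loE dom_i1 prev_valid).
split=> //; have [sw_i_o|] := eqVneq (sw s i).2 o; last by case: (sw s i).2 o => [] [].
case: off_i; split=> //.
have valid_i := hw.1.2.1 i dom_i dom_i1.
by apply: (valid_pair_uniq_l hQb valid_i prev_valid); rewrite sw_i1 !cycle_letter_orientation.
Qed.

Lemma bounded_cycle_run_kisses a b :
  a < k0 -> k0 + Z.of_nat m <= b -> opposite_letter_at a -> opposite_letter_at b ->
  (forall i, a < i < b -> on_cycle_run i) -> kisses_itself s.
Proof.
move=> lt_a le_b [dom_a sw_a] [dom_b sw_b] run.
apply: (@periodic_run_kisses _ s (fun i => cycle_letter o (i - k0)) o (Z.of_nat m) a b hw.1);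
  rewrite //=; try lia.
- by move=> i; rewrite Z.add_sub_swap cycle_letter_periodic.
- by move=> i; rewrite cycle_letter_orientation.
- move=> i; rewrite (_ : i + 1 - k0 = i - k0 + 1); last by lia.
  exact: (cycle_letter_valid o (i - k0)).1.
- by move=> i /run [].
Qed.

Lemma ends_with_cycle_of_run_hi :
  (forall n : nat, on_cycle_run (k0 + Z.of_nat n)) -> ends_with_cycle iA s m c.
Proof.
move=> run.
have hiE : shi s = None.
  case E: (shi s) => [h|] //.
  by move: (run (Z.to_nat (h - k0))).1 (run 0%N).1; rewrite /indom E; lia.
apply: (ends_with_cycle_of_letters hiE (_ : indom _ _ k0)) => [|n].
  by rewrite -[k0]Z.add_0_r; exact: (run 0%N).1.
by rewrite (run n).2 Z.add_simpl_l.
Qed.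

Lemma ends_with_cycle_of_run_lo :
  (forall n : nat, on_cycle_run (k0 - 1 - Z.of_nat n)) -> ends_with_cycle iA (str_inv s) m c.
Proof.
move=> run.
have loE : slo s = None.
  case E: (slo s) => [l|] //.
  by move: (run (Z.to_nat (k0 - 1 - l))).1 (run 0%N).1; rewrite /indom E; lia.
apply: (@ends_with_cycle_of_letters _ (1 - k0) (~~ o)) => [||n].
- by rewrite /str_inv /= loE.
- move: (run 0%N).1; rewrite /indom /str_inv; cbn [slo shi]; rewrite loE.
  by case: (shi s) => [h|]; cbn [option_map]; lia.
- change (letter_inv (sw s (- (1 - k0 + Z.of_nat n))) = cycle_letter (~~ o) (Z.of_nat n)).
  have -> : - (1 - k0 + Z.of_nat n) = k0 - 1 - Z.of_nat n by lia.
  rewrite (run n).2; have -> : k0 - 1 - Z.of_nat n - k0 = - 1 - Z.of_nat n by lia.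
  by rewrite cycle_letter_opp letter_invK.
Qed.

End Run.

End CycleRun.

Theorem lemma5p9 (Q Qb : bquiver) (iV : qV Q -> qV Qb) (iA : qA Q -> qA Qb)
  (hQ : locally_gentle Q) (hb : is_blossoming iV iA)
  (omega : str Qb) (hw : is_walk omega) (hnk : ~ kisses_itself omega)
  (m : nat) (c : nat -> qA Q) (hc : cycle_not_in_I m c)
  (hfac : has_cycle_factor iA omega m c) :
  ends_with_cycle iA omega m c \/ ends_with_cycle iA (str_inv omega) m c.
Proof.
have [m_gt0 _] := hc.
have [k0 [dom_fac fac]] := hfac.
have [o run0] : exists o, forall l : nat, (l < m)%N ->
    on_cycle_run iA m c omega o k0 (k0 + Z.of_nat l).
  case: fac => fac; [exists true | exists false] => l lt_lm;
    (split; [exact: dom_fac | by rewrite fac // Z.add_simpl_l (cycle_letter_nat _ hc) modn_small]).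
case: (maximal_run_around run0) => [run_hi | run_lo | [a [b [lt_a le_b off_a off_b run]]]].
- by left; apply: ends_with_cycle_of_run_hi hc _ _ _ run_hi.
- by right; apply: ends_with_cycle_of_run_lo hc _ _ _ run_lo.
- case: hnk; apply: (bounded_cycle_run_kisses hb hc hw lt_a le_b _ _ run).
    by apply: (cycle_run_exit_lo hb hc hw _ off_a); apply: run; lia.
  by apply: (cycle_run_exit_hi hb hc hw _ off_b); apply: run; lia.
Qed.
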